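(* Let $x_1,x_2>0$ and $\pi\in(0,1)$ be as described in the context, and let $\pi_0=\frac{1-x_1x_2}{x_1+x_2-2x_1x_2}$. Diffusion occurs from a small seed if and only if one of the following holds: (1) $x_1x_2>1$; or (2) $x_1x_2\le1$, $(x_1,x_2)\neq(1,1)$, and $\pi>\pi_0$.
   Context: There are two types $i\in\{1,2\}$, with meeting matrix $\Pi=\begin{pmatrix}\pi&1-\pi\\1-\pi&\pi\end{pmatrix}$, $0<\pi<1$ ($\pi_{ij}$ is the probability a meeting of a type-$i$ agent is with a type-$j$ agent). For each type $i$: $P_i$ is a degree distribution on the nonnegative integers; $w_i(d)>0$ are degree weights for $d$ with $P_i(d)>0$; $f_i(d,a)$ and $g_i(d,a)$ ($0\le a\le d$) are the adoption and abandonment rates of a type-$i$, degree-$d$ agent who meets $a$ adopters, satisfying: $f_i(d,0)=0$; $f_i(d,a)$ nondecreasing in $a$; $f_i(d,1)>0$ for some $d$ with $P_i(d)>0$; $g_i(d,0)>0$; $g_i(d,a)$ nonincreasing in $a$. Let $x_i=\sum_dP_i(d)w_i(d)\,d\,\frac{f_i(d,1)}{g_i(d,0)}$, assumed finite (it is positive), and $$A=\begin{pmatrix}\pi x_1&(1-\pi)x_2\\(1-\pi)x_1&\pi x_2\end{pmatrix}.$$ Diffusion occurs from a small seed means: for every $\varepsilon>0$ there exists $v\in\mathbb{R}^2$ with $0<v_i<\varepsilon$ and $(Av)_i>v_i$ for $i=1,2$. *)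

From Stdlib Require Import Reals.
Open Scope R_scope.

Definition Av1 (pi x1 x2 v1 v2 : R) : R := pi * x1 * v1 + (1 - pi) * x2 * v2.
Definition Av2 (pi x1 x2 v1 v2 : R) : R := (1 - pi) * x1 * v1 + pi * x2 * v2.

Definition diffusion_small_seed (pi x1 x2 : R) : Prop :=
  forall eps : R, 0 < eps ->
    exists v1 v2 : R,
      0 < v1 < eps /\ 0 < v2 < eps /\
      Av1 pi x1 x2 v1 v2 > v1 /\ Av2 pi x1 x2 v1 v2 > v2.

Definition pi0 (x1 x2 : R) : R := (1 - x1 * x2) / (x1 + x2 - 2 * x1 * x2).

From Stdlib Require Import Reals Lra Psatz.
Open Scope R_scope.

(* Because A is linear and its off-diagonal entries are positive, a small seed
   exists iff some positive v has Av > v (rescale it), i.e. iff the 2x2 system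
   (1 - pi x1) v1 < (1-pi) x2 v2, (1 - pi x2) v2 < (1-pi) x1 v1 has a positive
   solution.  This happens iff both diagonal defects are nonpositive or their
   product is below the product of the off-diagonal entries.  That product
   difference equals 1 - x1 x2 - pi (x1 + x2 - 2 x1 x2), which is linear in pi
   and negative exactly when pi > pi0 once x1 x2 <= 1; when x1 x2 > 1 the
   condition holds for every pi. *)

Lemma positive_solution_2x2_iff (a b c d : R) : 0 < b -> 0 < c ->
  (exists v1 v2, 0 < v1 /\ 0 < v2 /\ a * v1 < b * v2 /\ d * v2 < c * v1) <->
  ((a <= 0 /\ d <= 0) \/ a * d < b * c).
Proof.
  intros hb hc; split.
  - intros (v1 & v2 & h1 & h2 & h12 & h21).
    assert (hbc : 0 < b * c) by nra.
    destruct (Rle_or_lt a 0) as [ha|ha], (Rle_or_lt d 0) as [hd|hd];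
      [left; lra | right; nra | right; nra |].
    right.
    assert (hprod : (a * v1) * (d * v2) < (b * v2) * (c * v1))
      by (apply Rmult_le_0_lt_compat; nra).
    nra.
  - intros H.
    destruct (Rle_or_lt a 0) as [ha|ha], (Rle_or_lt d 0) as [hd|hd].
    + exists 1, 1; lra.
    + exists (2 * d), c; nra.
    + exists b, (2 * a); nra.
    + destruct H as [[ha' hd']|H]; [lra|].
      (* b v2 - a v1 = b (bc - ad) and c v1 - d v2 = d (bc - ad) *)
      exists (2 * b * d), (a * d + b * c); nra.
Qed.

Lemma Av1_scale pi x1 x2 t v1 v2 :
  Av1 pi x1 x2 (t * v1) (t * v2) = t * Av1 pi x1 x2 v1 v2.
Proof. unfold Av1; ring. Qed.

Lemma Av2_scale pi x1 x2 t v1 v2 :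
  Av2 pi x1 x2 (t * v1) (t * v2) = t * Av2 pi x1 x2 v1 v2.
Proof. unfold Av2; ring. Qed.

Lemma diffusion_small_seed_iff_expanding pi x1 x2 :
  diffusion_small_seed pi x1 x2 <->
  exists v1 v2, 0 < v1 /\ 0 < v2 /\
    Av1 pi x1 x2 v1 v2 > v1 /\ Av2 pi x1 x2 v1 v2 > v2.
Proof.
  split.
  - intros H.
    destruct (H 1 Rlt_0_1) as (v1 & v2 & h1 & h2 & h3 & h4).
    exists v1, v2; repeat split; tauto.
  - intros (v1 & v2 & h1 & h2 & h3 & h4) eps heps.
    set (t := eps / (v1 + v2)).
    assert (ht : 0 < t) by (apply Rdiv_lt_0_compat; lra).
    assert (htv : t * v1 + t * v2 = eps) by (unfold t; field; lra).
    exists (t * v1), (t * v2).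
    rewrite Av1_scale, Av2_scale.
    repeat split; nra.
Qed.

Lemma expanding_iff pi x1 x2 : 0 < x1 -> 0 < x2 -> pi < 1 ->
  (exists v1 v2, 0 < v1 /\ 0 < v2 /\
     Av1 pi x1 x2 v1 v2 > v1 /\ Av2 pi x1 x2 v1 v2 > v2) <->
  ((1 - pi * x1 <= 0 /\ 1 - pi * x2 <= 0) \/
   (1 - pi * x1) * (1 - pi * x2) < ((1 - pi) * x2) * ((1 - pi) * x1)).
Proof.
  intros hx1 hx2 hpi.
  rewrite <- positive_solution_2x2_iff by nra.
  unfold Av1, Av2.
  split; intros (v1 & v2 & h); exists v1, v2; lra.
Qed.

Lemma defect_product_identity pi x1 x2 :
  (1 - pi * x1) * (1 - pi * x2) - ((1 - pi) * x2) * ((1 - pi) * x1) =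
  1 - x1 * x2 - pi * (x1 + x2 - 2 * x1 * x2).
Proof. ring. Qed.

Lemma pi0_denominator_pos x1 x2 : 0 < x1 -> 0 < x2 -> x1 * x2 <= 1 ->
  (x1, x2) <> (1, 1) -> 0 < x1 + x2 - 2 * x1 * x2.
Proof.
  intros hx1 hx2 hp hne.
  destruct (Rlt_or_le 0 (x1 + x2 - 2 * x1 * x2)) as [h|h]; [exact h|].
  exfalso.
  assert (x1 = x2) by nra; subst x2.
  assert (x1 = 1) by nra; subst x1.
  exact (hne eq_refl).
Qed.

Lemma gt_pi0_iff pi x1 x2 : 0 < x1 -> 0 < x2 -> x1 * x2 <= 1 ->
  (x1, x2) <> (1, 1) ->
  pi > pi0 x1 x2 <-> pi * (x1 + x2 - 2 * x1 * x2) > 1 - x1 * x2.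
Proof.
  intros hx1 hx2 hp hne.
  pose proof (pi0_denominator_pos x1 x2 hx1 hx2 hp hne) as hD.
  assert (e : pi * (x1 + x2 - 2 * x1 * x2) - (1 - x1 * x2) =
              (x1 + x2 - 2 * x1 * x2) * (pi - pi0 x1 x2))
    by (unfold pi0; field; lra).
  split; intro; nra.
Qed.

Lemma supercritical_expanding pi x1 x2 : 0 < x1 -> 0 < x2 -> 0 < pi < 1 ->
  x1 * x2 > 1 ->
  (1 - pi * x1 <= 0 /\ 1 - pi * x2 <= 0) \/
  (1 - pi * x1) * (1 - pi * x2) < ((1 - pi) * x2) * ((1 - pi) * x1).
Proof.
  intros hx1 hx2 hpi hp.
  destruct (Rle_or_lt ((1 - x1) * (1 - x2)) 0) as [hq|hq].
  - (* the right side of the identity is (1-pi)(1 - x1 x2) + pi (1-x1)(1-x2) *)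
    right; pose proof (defect_product_identity pi x1 x2); nra.
  - assert (hgt : 1 < x1 /\ 1 < x2) by (split; nra).
    destruct (Rle_or_lt (1 - pi * x1) 0) as [h1|h1],
             (Rle_or_lt (1 - pi * x2) 0) as [h2|h2];
      [left; lra | right; nra | right; nra |].
    (* 1 < x_i gives 1 - pi x_i < (1 - pi) x_i *)
    right; nra.
Qed.

Lemma subcritical_expanding_iff pi x1 x2 : 0 < x1 -> 0 < x2 -> 0 < pi < 1 ->
  x1 * x2 <= 1 ->
  ((1 - pi * x1 <= 0 /\ 1 - pi * x2 <= 0) \/
   (1 - pi * x1) * (1 - pi * x2) < ((1 - pi) * x2) * ((1 - pi) * x1)) <->
  ((x1, x2) <> (1, 1) /\ pi > pi0 x1 x2).
Proof.
  intros hx1 hx2 hpi hp.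
  pose proof (defect_product_identity pi x1 x2) as e.
  assert (hboth : ~ (1 - pi * x1 <= 0 /\ 1 - pi * x2 <= 0)).
  { intros [h1 h2]. assert (1 <= (pi * x1) * (pi * x2)) by nra. nra. }
  split.
  - intros [H|H]; [contradiction|].
    assert (hne : (x1, x2) <> (1, 1)).
    { intro heq; injection heq as -> ->; lra. }
    split; [exact hne|].
    apply gt_pi0_iff; auto; lra.
  - intros [hne hgt]; right.
    apply gt_pi0_iff in hgt; auto; lra.
Qed.

Theorem theorem2 (pi x1 x2 : R) (hx1 : 0 < x1) (hx2 : 0 < x2)
  (hpi : 0 < pi < 1) :
  diffusion_small_seed pi x1 x2 <->
  (x1 * x2 > 1 \/
   (x1 * x2 <= 1 /\ (x1, x2) <> (1, 1) /\ pi > pi0 x1 x2)).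
Proof.
  rewrite diffusion_small_seed_iff_expanding, expanding_iff by lra.
  destruct (Rlt_or_le 1 (x1 * x2)) as [hp|hp].
  - split; [intros _; now left|intros _].
    now apply supercritical_expanding.
  - rewrite subcritical_expanding_iff by lra.
    split; [intros H; right; tauto | intros [H|H]; [lra | tauto]].
Qed.
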